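(* There exists a constant $B_3>0$ depending only on $d$ such that for all $p\in(1,\infty)$, $\alpha\in(0,d/p)$ and $q\in[p,\infty)$ with $\frac1q=\frac1p-\frac\alpha d$, \[ \frac{1}{B_3}S(p,q)\le\widetilde E_H(p,q,d)\le B_3\,S(p,q), \qquad\text{where } S(p,q)=\min\Big(\frac{q^{1/p'}}{p-1},\frac{{p'}^{1/q}}{q'-1}\Big). \]
   Context: Here $d\in\mathbb{N}^*$, $p'=p/(p-1)$, $q'=q/(q-1)$, $\omega_{d-1}$ is the surface measure of the unit sphere in $\mathbb{R}^d$, and \[ \widetilde E_H(p,q,d)=\frac{1}{(2\pi)^\alpha}\frac{\Gamma((d-\alpha)/2)}{\Gamma(\alpha/2)}\frac d\alpha\Big(\frac{\omega_{d-1}}{d}\Big)^{1-\frac\alpha d}\Big(1-\frac\alpha d\Big)^{1-\frac\alpha d}\frac{1}{pq'}\Big({p'}^{\frac1{p'}+\frac1q}+q^{\frac1{p'}+\frac1q}\Big). \] (This is Lieb's upper bound for the best constant of the homogeneous Sobolev embedding $\|\Delta^{-\alpha/2}f\|_{L^q(\mathbb{R}^d)}\le C\|f\|_{L^p(\mathbb{R}^d)}$.) *)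

From Stdlib Require Import Reals.
From Coquelicot Require Import Coquelicot.
Open Scope R_scope.

(* Euler's Gamma function, Gamma(s) = int_0^oo t^(s-1) e^(-t) dt
   (improper Riemann integral; used only for s > 0, where it converges). *)
Definition Gamma (s : R) : R :=
  RInt_gen (fun t => Rpower t (s - 1) * exp (- t)) (at_right 0) (Rbar_locally p_infty).

Definition omega_sphere (d : nat) : R :=
  2 * Rpower PI (INR d / 2) / Gamma (INR d / 2).

Definition conj_exp (p : R) : R := p / (p - 1).

(* Lieb's upper bound tilde E_H(p,q,d); alpha is determined by 1/q = 1/p - alpha/d
   and is passed explicitly. *)
Definition E_H_tilde (alpha p q : R) (d : nat) : R :=
  let dd := INR d in
  let p' := conj_exp p in
  let q' := conj_exp q in
  / Rpower (2 * PI) alpha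
  * (Gamma ((dd - alpha) / 2) / Gamma (alpha / 2))
  * (dd / alpha)
  * Rpower (omega_sphere d / dd) (1 - alpha / dd)
  * Rpower (1 - alpha / dd) (1 - alpha / dd)
  * / (p * q')
  * (Rpower p' (/ p' + / q) + Rpower q (/ p' + / q)).

Definition S_pq (p q : R) : R :=
  Rmin (Rpower q (/ conj_exp p) / (p - 1))
       (Rpower (conj_exp p) (/ q) / (conj_exp q - 1)).

From Stdlib Require Import Reals Lra.
From Coquelicot Require Import Coquelicot.
Open Scope R_scope.

(* With x = 1/p, y = 1/q and s = 1/p' + 1/q = 1 - alpha/d, Lieb's constant splits as
   [s * prefactor(alpha)] * [x (1-y) / s * (p'^s + q^s)].
   Since s Gamma(s) is bounded above and below on (0, d/2], the singularities of
   Gamma(alpha/2) and Gamma((d-alpha)/2) cancel against d/alpha and 1/s, so the first factor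
   is bounded above and below by constants depending only on d.  In the second factor,
   p'^s = p'^(1/p') p'^(1/q) and q^s = q^(1/q) q^(1/p'), where t^(1/t) lies in [1, e] for
   t >= 1; the remaining terms are compared with the two entries of S(p,q) using
   a^b <= e max(a, 1-b) for a, b in (0, 1]. *)

Lemma exp_le x y : x <= y -> exp x <= exp y.
Proof.
  intros [Hlt | ->]; [now left; apply exp_increasing | apply Rle_refl].
Qed.

Lemma Rpower_pos x y : 0 < Rpower x y.
Proof. apply exp_pos. Qed.

Lemma Rpower_ge_1 z t : 1 <= z -> 0 <= t -> 1 <= Rpower z t.
Proof.
  intros Hz Ht. unfold Rpower. rewrite <- exp_0. apply exp_le.
  assert (0 <= ln z) by (rewrite <- ln_1; apply ln_le; lra).
  nra.
Qed.

Lemma ln_le_sub_1 z : 0 < z -> ln z <= z - 1.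
Proof.
  intros Hz. rewrite <- (ln_exp (z - 1)).
  apply ln_le; [exact Hz | generalize (exp_ineq1_le (z - 1)); lra].
Qed.

Lemma neg_xlnx_le m : 0 < m -> - (m * ln m) <= 1 - m.
Proof.
  intros Hm.
  assert (H := ln_le_sub_1 (/ m) (Rinv_0_lt_compat m Hm)).
  rewrite ln_Rinv in H by exact Hm.
  replace (1 - m) with (m * (/ m - 1)) by (field; lra).
  apply (Rmult_le_compat_l m) in H; lra.
Qed.

Lemma Rpower_self_bounds s : 0 < s <= 1 -> exp (-1) <= Rpower s s <= 1.
Proof.
  intros Hs. unfold Rpower.
  assert (Hln : ln s <= 0) by (rewrite <- ln_1; apply ln_le; lra).
  assert (H := neg_xlnx_le s (proj1 Hs)).
  split; [apply exp_le; lra | rewrite <- exp_0; apply exp_le; nra].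
Qed.

Lemma Rpower_inv_ge_1 a t : 0 < a <= 1 -> 0 <= t -> 1 <= Rpower (/ a) t.
Proof.
  intros Ha Ht. apply Rpower_ge_1; [| exact Ht].
  rewrite <- Rinv_1. apply Rinv_le_contravar; lra.
Qed.

Lemma Rpower_inv_self_bounds u : 0 < u <= 1 -> 1 <= Rpower (/ u) u <= exp 1.
Proof.
  intros Hu. split.
  - apply Rpower_inv_ge_1; lra.
  - unfold Rpower. rewrite ln_Rinv by lra. apply exp_le.
    generalize (neg_xlnx_le u (proj1 Hu)). lra.
Qed.

Lemma Rpower_le_e_Rmax a b :
  0 < a <= 1 -> 0 <= b <= 1 -> Rpower a b <= exp 1 * Rmax a (1 - b).
Proof.
  intros Ha Hb. set (m := Rmax a (1 - b)).
  assert (Ham : a <= m) by apply Rmax_l.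
  assert (Hbm : 1 - b <= m) by apply Rmax_r.
  assert (Hm1 : m <= 1) by (apply Rmax_lub; lra).
  assert (Hlnm : ln m <= 0) by (rewrite <- ln_1; apply ln_le; lra).
  assert (Hlna : ln a <= ln m) by (apply ln_le; lra).
  assert (H := neg_xlnx_le m ltac:(lra)).
  (* a^b <= m^b = m exp((1-b)(-ln m)) <= m exp(-m ln m) <= m exp(1-m) <= e m *)
  unfold Rpower. rewrite <- (exp_ln m), <- exp_plus by lra. apply exp_le.
  assert (b * ln a <= b * ln m) by (apply Rmult_le_compat_l; lra).
  assert ((1 - b) * - ln m <= m * - ln m) by (apply Rmult_le_compat_r; lra).
  nra.
Qed.

Lemma Rpower_exponent_01_bounds a s :
  0 <= s <= 1 -> exp (- Rabs (ln a)) <= Rpower a s <= exp (Rabs (ln a)).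
Proof.
  intros Hs. unfold Rpower.
  assert (Rabs (s * ln a) <= Rabs (ln a)).
  { rewrite Rabs_mult, (Rabs_pos_eq s) by lra.
    generalize (Rabs_pos (ln a)). nra. }
  generalize (Rle_abs (s * ln a)) (Rle_abs (- (s * ln a))). rewrite Rabs_Ropp.
  split; apply exp_le; lra.
Qed.

Lemma mul_Rpower_inv_le a t :
  0 < a <= 1 -> 0 <= t <= 1 -> a * Rpower (/ a) t <= exp 1 * Rmax a t.
Proof.
  intros Ha Ht.
  replace (a * Rpower (/ a) t) with (Rpower a (1 - t)).
  - replace t with (1 - (1 - t)) at 2 by ring. apply Rpower_le_e_Rmax; lra.
  - unfold Rpower. rewrite ln_Rinv by lra. rewrite <- (exp_ln a) at 2 by lra.
    rewrite <- exp_plus. f_equal. ring.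
Qed.

Lemma Rmult_le_compat_bounds a b la ua lb ub :
  0 <= la -> 0 <= lb -> la <= a <= ua -> lb <= b <= ub -> la * lb <= a * b <= ua * ub.
Proof. intros. split; apply Rmult_le_compat; lra. Qed.

Lemma Rinv_bounds a l u : 0 < l -> l <= a <= u -> / u <= / a <= / l.
Proof. intros. split; apply Rinv_le_contravar; lra. Qed.

(** * Bounds on s Gamma(s) *)

Definition gamma_integrand (s t : R) : R := Rpower t (s - 1) * exp (- t).

Lemma gamma_integrand_pos s t : 0 < gamma_integrand s t.
Proof. apply Rmult_lt_0_compat; apply exp_pos. Qed.

Lemma is_derive_Rpower_l y x :
  0 < x -> is_derive (fun t => Rpower t y) x (y * Rpower x (y - 1)).
Proof. intros Hx. apply is_derive_Reals, derivable_pt_lim_power, Hx. Qed.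

Lemma continuous_Rpower_l y x : 0 < x -> continuous (fun t => Rpower t y) x.
Proof.
  intros Hx. apply (ex_derive_continuous (V := R_NormedModule)).
  eexists. now apply is_derive_Rpower_l.
Qed.

Lemma gamma_integrand_continuous s x : 0 < x -> continuous (gamma_integrand s) x.
Proof.
  intros Hx. apply (continuous_mult (fun t => Rpower t (s - 1)) (fun t => exp (- t))).
  - now apply continuous_Rpower_l.
  - apply (ex_derive_continuous (V := R_NormedModule)). auto_derive. easy.
Qed.

Lemma ex_RInt_gamma_integrand s a b : 0 < a -> 0 < b -> ex_RInt (gamma_integrand s) a b.
Proof.
  intros Ha Hb. apply (ex_RInt_continuous (V := R_CompleteNormedModule)).
  intros z Hz. apply gamma_integrand_continuous.
  assert (0 < Rmin a b) by (apply Rmin_glb_lt; assumption). lra.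
Qed.

Lemma RInt_gamma_integrand_nonneg s a b :
  0 < a <= b -> 0 <= RInt (gamma_integrand s) a b.
Proof.
  intros Hab. apply RInt_ge_0; [lra | apply ex_RInt_gamma_integrand; lra |].
  intros x _. apply Rlt_le, gamma_integrand_pos.
Qed.

Lemma is_RInt_Rpower s a b : 0 < s -> 0 < a -> 0 < b ->
  is_RInt (fun t => Rpower t (s - 1)) a b ((Rpower b s - Rpower a s) / s).
Proof.
  intros Hs Ha Hb.
  assert (Hm : 0 < Rmin a b) by (apply Rmin_glb_lt; assumption).
  replace ((Rpower b s - Rpower a s) / s)
    with (minus (Rpower b s / s) (Rpower a s / s))
    by (unfold minus, plus, opp; simpl; field; lra).
  apply (is_RInt_derive (V := R_CompleteNormedModule) (fun t => Rpower t s / s)).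
  - intros t Ht.
    replace (Rpower t (s - 1)) with (/ s * (s * Rpower t (s - 1))) by (field; lra).
    apply (is_derive_ext (fun u => / s * Rpower u s)); [intros u; unfold Rdiv; simpl; ring |].
    apply is_derive_scal, is_derive_Rpower_l. lra.
  - intros x Hx. apply continuous_Rpower_l. lra.
Qed.

Lemma is_RInt_exp_half a b :
  is_RInt (fun t => exp (- t / 2)) a b (2 * (exp (- a / 2) - exp (- b / 2))).
Proof.
  replace (2 * (exp (- a / 2) - exp (- b / 2)))
    with (minus (-2 * exp (- b / 2)) (-2 * exp (- a / 2)))
    by (unfold minus, plus, opp; simpl; ring).
  apply (is_RInt_derive (V := R_CompleteNormedModule) (fun t => -2 * exp (- t / 2))).
  - intros x _. auto_derive; [easy | unfold Rdiv; field].
  - intros x _. apply (ex_derive_continuous (V := R_NormedModule)). auto_derive. easy.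
Qed.

Lemma gamma_integrand_le_01 s t :
  0 < t <= 1 -> exp (-1) * Rpower t (s - 1) <= gamma_integrand s t <= Rpower t (s - 1).
Proof.
  intros Ht. unfold gamma_integrand. generalize (Rpower_pos t (s - 1)). intros Hp.
  split.
  - rewrite Rmult_comm. apply Rmult_le_compat_l; [lra | apply exp_le; lra].
  - rewrite <- (Rmult_1_r (Rpower t (s - 1))) at 2.
    apply Rmult_le_compat_l; [lra | rewrite <- exp_0; apply exp_le; lra].
Qed.

(* [(2K/e)^K] is the maximum of [t^K e^(-t/2)] over [t > 0], attained at [t = 2K]. *)
Definition gamma_tail_const (K : R) : R := exp (K * ln (2 * K) - K).

Lemma gamma_integrand_le_tail K s t :
  0 < K -> s <= K -> 1 <= t -> gamma_integrand s t <= gamma_tail_const K * exp (- t / 2).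
Proof.
  intros HK Hs Ht. unfold gamma_integrand, gamma_tail_const, Rpower.
  rewrite <- !exp_plus. apply exp_le.
  assert (Hlnt : 0 <= ln t) by (rewrite <- ln_1; apply ln_le; lra).
  assert (Hpow : (s - 1) * ln t <= K * ln t) by (apply Rmult_le_compat_r; lra).
  assert (H := ln_le_sub_1 (t / (2 * K)) ltac:(apply Rdiv_lt_0_compat; lra)).
  rewrite ln_div in H by lra.
  apply (Rmult_le_compat_l K) in H; [| lra].
  replace (K * (t / (2 * K) - 1)) with (t / 2 - K) in H by (field; lra).
  lra.
Qed.

Lemma RInt_gamma_integrand_01 s a b : 0 < s -> 0 < a <= b -> b <= 1 ->
  exp (-1) * ((Rpower b s - Rpower a s) / s) <= RInt (gamma_integrand s) a b
  <= (Rpower b s - Rpower a s) / s.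
Proof.
  intros Hs Hab Hb.
  assert (I := is_RInt_Rpower s a b Hs ltac:(lra) ltac:(lra)).
  assert (Ie : is_RInt (fun t => exp (-1) * Rpower t (s - 1)) a b
                 (exp (-1) * ((Rpower b s - Rpower a s) / s)))
    by exact (is_RInt_scal _ _ _ _ _ I).
  assert (Hg := ex_RInt_gamma_integrand s a b ltac:(lra) ltac:(lra)).
  split.
  - rewrite <- (is_RInt_unique _ _ _ _ Ie).
    apply RInt_le; [lra | eexists; exact Ie | exact Hg |].
    intros x Hx. apply gamma_integrand_le_01. lra.
  - rewrite <- (is_RInt_unique _ _ _ _ I).
    apply RInt_le; [lra | exact Hg | eexists; exact I |].
    intros x Hx. apply gamma_integrand_le_01. lra.
Qed.

Lemma RInt_gamma_integrand_le_tail K s a b : 0 < K -> s <= K -> 1 <= a <= b ->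
  RInt (gamma_integrand s) a b
  <= gamma_tail_const K * (2 * (exp (- a / 2) - exp (- b / 2))).
Proof.
  intros HK Hs Hab.
  assert (I : is_RInt (fun t => gamma_tail_const K * exp (- t / 2)) a b
                (gamma_tail_const K * (2 * (exp (- a / 2) - exp (- b / 2)))))
    by exact (is_RInt_scal _ _ _ _ _ (is_RInt_exp_half a b)).
  rewrite <- (is_RInt_unique _ _ _ _ I).
  apply RInt_le; [lra | apply ex_RInt_gamma_integrand; lra | eexists; exact I |].
  intros x Hx. apply gamma_integrand_le_tail; lra.
Qed.

Definition gamma_primitive (s x : R) : R := RInt (gamma_integrand s) 1 x.

Lemma gamma_primitive_sub s u v :
  0 < u -> 0 < v -> gamma_primitive s v - gamma_primitive s u = RInt (gamma_integrand s) u v.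
Proof.
  intros Hu Hv. unfold gamma_primitive.
  rewrite <- (RInt_Chasles (V := R_CompleteNormedModule) (gamma_integrand s) 1 u v)
    by (apply ex_RInt_gamma_integrand; lra).
  unfold plus; simpl. ring.
Qed.

Lemma is_derive_gamma_primitive s x :
  0 < x -> is_derive (gamma_primitive s) x (gamma_integrand s x).
Proof.
  intros Hx. apply (is_derive_RInt (V := R_NormedModule) _ _ 1).
  - exists (mkposreal (x / 2) ltac:(lra)). intros y Hy.
    change (Rabs (y - x) < x / 2) in Hy. apply Rabs_def2 in Hy.
    apply (RInt_correct (V := R_CompleteNormedModule)), ex_RInt_gamma_integrand; lra.
  - now apply gamma_integrand_continuous.
Qed.

Lemma continuous_Derive_gamma_primitive s x :
  0 < x -> continuous (Derive (gamma_primitive s)) x.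
Proof.
  intros Hx. apply (continuous_ext_loc (T := R_UniformSpace) (U := R_UniformSpace) _
    (gamma_integrand s)).
  - exists (mkposreal (x / 2) ltac:(lra)). intros y Hy.
    change (Rabs (y - x) < x / 2) in Hy. apply Rabs_def2 in Hy.
    symmetry. apply is_derive_unique, is_derive_gamma_primitive. lra.
  - now apply gamma_integrand_continuous.
Qed.

Lemma at_right_0_interval delta : 0 < delta -> at_right 0 (fun y => 0 < y < delta).
Proof.
  intros Hd. exists (mkposreal delta Hd). intros y Hy Hy0.
  change (Rabs (y - 0) < delta) in Hy. rewrite Rminus_0_r in Hy.
  apply Rabs_def2 in Hy. lra.
Qed.

Lemma filterlim_of_ordered_cauchy {F : (R -> Prop) -> Prop} {FF : ProperFilter F}
  (f : R -> R) :
  (forall eps : posreal, exists P, F P /\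
     forall u v, P u -> P v -> u <= v -> Rabs (f v - f u) < eps) ->
  exists l, filterlim f F (locally l).
Proof.
  intros Hf. apply (filterlim_locally_cauchy (U := R_CompleteSpace)). intros eps.
  destruct (Hf eps) as [P [HP Hinc]]. exists P. split; [exact HP |].
  intros u v Hu Hv. change (Rabs (f v - f u) < eps).
  destruct (Rle_dec u v) as [Huv | Huv]; [now apply Hinc |].
  rewrite Rabs_minus_sym. apply Hinc; auto; lra.
Qed.

Lemma filterlim_le_of_eventually {F : (R -> Prop) -> Prop} {FF : ProperFilter F}
  (f : R -> R) l c : filterlim f F (locally l) -> F (fun x => f x <= c) -> l <= c.
Proof.
  intros Hl Hc.
  exact (filterlim_le (F := F) f (fun _ => c) l c Hc Hl (filterlim_const c)).
Qed.

Lemma filterlim_ge_of_eventually {F : (R -> Prop) -> Prop} {FF : ProperFilter F}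
  (f : R -> R) l c : filterlim f F (locally l) -> F (fun x => c <= f x) -> c <= l.
Proof.
  intros Hl Hc.
  exact (filterlim_le (F := F) (fun _ => c) f c l Hc (filterlim_const c) Hl).
Qed.

Lemma Rpower_lt_of_lt_root c s y :
  0 < s -> 0 < c -> 0 < y < Rpower c (/ s) -> Rpower y s < c.
Proof.
  intros Hs Hc Hy.
  apply Rlt_le_trans with (Rpower (Rpower c (/ s)) s); [apply Rlt_Rpower_l; lra |].
  rewrite Rpower_mult, Rinv_l, Rpower_1; lra.
Qed.

Lemma gamma_primitive_lt_1 s y :
  0 < y -> gamma_primitive s y = - RInt (gamma_integrand s) y 1.
Proof.
  intros Hy. rewrite <- gamma_primitive_sub by lra.
  unfold gamma_primitive at 2. rewrite RInt_point. unfold zero; simpl. ring.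
Qed.

Lemma ex_lim_gamma_primitive_0 s :
  0 < s -> exists l, filterlim (gamma_primitive s) (at_right 0) (locally l).
Proof.
  intros Hs. apply filterlim_of_ordered_cauchy. intros eps.
  assert (Heps : 0 < eps * s) by (apply Rmult_lt_0_compat; [apply cond_pos | exact Hs]).
  assert (Hdelta : 0 < Rmin 1 (Rpower (eps * s) (/ s)))
    by (apply Rmin_glb_lt; [lra | apply Rpower_pos]).
  exists (fun y => 0 < y < Rmin 1 (Rpower (eps * s) (/ s))).
  split; [now apply at_right_0_interval |].
  intros u v Hu Hv Huv.
  generalize (Rmin_l 1 (Rpower (eps * s) (/ s))) (Rmin_r 1 (Rpower (eps * s) (/ s))).
  intros Hv1 Hv2.
  assert (Hvs : Rpower v s < eps * s) by (apply Rpower_lt_of_lt_root; lra).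
  rewrite gamma_primitive_sub, Rabs_pos_eq by
    (try apply RInt_gamma_integrand_nonneg; lra).
  destruct (RInt_gamma_integrand_01 s u v Hs ltac:(lra) ltac:(lra)) as [_ Hle].
  apply Rle_lt_trans with (1 := Hle). apply Rlt_div_l; [lra |].
  generalize (Rpower_pos u s). lra.
Qed.

Lemma ex_lim_gamma_primitive_infty s :
  0 < s -> exists l, filterlim (gamma_primitive s) (Rbar_locally p_infty) (locally l).
Proof.
  intros Hs. apply filterlim_of_ordered_cauchy. intros eps.
  set (C := gamma_tail_const s).
  assert (HC : 0 < C) by apply exp_pos.
  assert (Heps : 0 < eps) by apply cond_pos.
  set (M := Rmax 1 (2 * ln (2 * C / eps))).
  exists (fun y => M < y). split; [now exists M |].
  intros u v Hu Hv Huv.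
  assert (HM1 : 1 <= M) by apply Rmax_l.
  assert (HM2 : 2 * ln (2 * C / eps) <= M) by apply Rmax_r.
  assert (Hexp : exp (- u / 2) < eps / (2 * C)).
  { replace (eps / (2 * C)) with (exp (- ln (2 * C / eps))).
    - apply exp_increasing. lra.
    - rewrite exp_Ropp, exp_ln by (apply Rdiv_lt_0_compat; lra). field; lra. }
  rewrite gamma_primitive_sub, Rabs_pos_eq by
    (try apply RInt_gamma_integrand_nonneg; lra).
  eapply Rle_lt_trans; [apply (RInt_gamma_integrand_le_tail s); lra |].
  fold C.
  assert (0 < 2 * C * exp (- v / 2)) by (generalize (exp_pos (- v / 2)); nra).
  apply (Rmult_lt_compat_l (2 * C)) in Hexp; [| lra].
  replace (2 * C * (eps / (2 * C))) with (pos eps) in Hexp by (field; lra).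
  lra.
Qed.

Lemma Gamma_eq_lim_sub s la lb : 0 < s ->
  filterlim (gamma_primitive s) (at_right 0) (locally la) ->
  filterlim (gamma_primitive s) (Rbar_locally p_infty) (locally lb) ->
  Gamma s = lb - la.
Proof.
  intros Hs Hla Hlb.
  assert (Hpos : filter_prod (at_right 0) (Rbar_locally p_infty)
    (fun ab => forall x, Rmin (fst ab) (snd ab) <= x <= Rmax (fst ab) (snd ab) -> 0 < x)).
  { apply (Filter_prod _ _ _ (fun a => 0 < a < 1) (fun b => 1 < b)).
    - apply at_right_0_interval. lra.
    - now exists 1.
    - intros a b Ha Hb x Hx. simpl in Hx. rewrite Rmin_left in Hx by lra. lra. }
  unfold Gamma. change (fun t => Rpower t (s - 1) * exp (- t)) with (gamma_integrand s).
  apply (is_RInt_gen_unique (V := R_CompleteNormedModule)).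
  apply (is_RInt_gen_ext (Derive (gamma_primitive s))).
  { eapply filter_imp; [| exact Hpos]. intros ab H x Hx.
    apply is_derive_unique, is_derive_gamma_primitive, H. lra. }
  apply is_RInt_gen_Derive; [| | exact Hla | exact Hlb];
    eapply filter_imp; try exact Hpos; intros ab H x Hx.
  - eexists. apply is_derive_gamma_primitive, H, Hx.
  - apply continuous_Derive_gamma_primitive, H, Hx.
Qed.

Lemma lim_gamma_primitive_infty_bounds K s lb : 0 < K -> s <= K ->
  filterlim (gamma_primitive s) (Rbar_locally p_infty) (locally lb) ->
  0 <= lb <= 2 * gamma_tail_const K.
Proof.
  intros HK Hs Hlb. split.
  - apply (filterlim_ge_of_eventually _ _ _ Hlb). exists 1. intros b Hb.
    apply RInt_gamma_integrand_nonneg. lra.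
  - apply (filterlim_le_of_eventually _ _ _ Hlb). exists 1. intros b Hb.
    eapply Rle_trans; [apply (RInt_gamma_integrand_le_tail K); lra |].
    generalize (exp_pos (- b / 2)) (exp_le (- (1) / 2) 0 ltac:(lra))
      (exp_pos (K * ln (2 * K) - K)).
    rewrite exp_0. unfold gamma_tail_const. nra.
Qed.

Lemma lim_gamma_primitive_0_bounds s la : 0 < s ->
  filterlim (gamma_primitive s) (at_right 0) (locally la) ->
  - / s <= la <= - (exp (-1) / (2 * s)).
Proof.
  intros Hs Hla.
  assert (Hpow1 : Rpower 1 s = 1) by (unfold Rpower; rewrite ln_1, Rmult_0_r; apply exp_0).
  split.
  - apply (filterlim_ge_of_eventually _ _ _ Hla).
    eapply filter_imp; [| apply (at_right_0_interval 1); lra]. intros y Hy.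
    rewrite gamma_primitive_lt_1 by lra.
    destruct (RInt_gamma_integrand_01 s y 1 ltac:(lra) ltac:(lra) ltac:(lra)) as [_ Hle].
    rewrite Hpow1 in Hle. generalize (Rpower_pos y s). intros.
    assert ((1 - Rpower y s) / s <= / s)
      by (apply Rle_div_l; [lra | rewrite Rinv_l; lra]).
    lra.
  - apply (filterlim_le_of_eventually _ _ _ Hla).
    assert (Hdelta : 0 < Rmin 1 (Rpower (/ 2) (/ s)))
      by (apply Rmin_glb_lt; [lra | apply Rpower_pos]).
    eapply filter_imp; [| apply (at_right_0_interval _ Hdelta)]. intros y Hy.
    generalize (Rmin_l 1 (Rpower (/ 2) (/ s))) (Rmin_r 1 (Rpower (/ 2) (/ s))).
    intros Hy1 Hy2.
    assert (Hys : Rpower y s < / 2) by (apply Rpower_lt_of_lt_root; lra).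
    rewrite gamma_primitive_lt_1 by lra.
    destruct (RInt_gamma_integrand_01 s y 1 ltac:(lra) ltac:(lra) ltac:(lra)) as [Hge _].
    rewrite Hpow1 in Hge.
    enough (exp (-1) / (2 * s) <= exp (-1) * ((1 - Rpower y s) / s)) by lra.
    replace (exp (-1) / (2 * s)) with (exp (-1) * (/ 2 / s)) by (field; lra).
    apply Rmult_le_compat_l; [apply Rlt_le, exp_pos |]. unfold Rdiv.
    apply Rmult_le_compat_r; [apply Rlt_le, Rinv_0_lt_compat |]; lra.
Qed.

Lemma Gamma_mul_bounds K s : 0 < s <= K ->
  exp (-1) / 2 <= s * Gamma s <= 2 * K * gamma_tail_const K + 1.
Proof.
  intros Hs.
  destruct (ex_lim_gamma_primitive_0 s ltac:(lra)) as [la Hla].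
  destruct (ex_lim_gamma_primitive_infty s ltac:(lra)) as [lb Hlb].
  rewrite (Gamma_eq_lim_sub s la lb) by (assumption || lra).
  assert (Hla_bounds := lim_gamma_primitive_0_bounds s la ltac:(lra) Hla).
  assert (Hlb_bounds := lim_gamma_primitive_infty_bounds K s lb ltac:(lra) ltac:(lra) Hlb).
  assert (Hinv : s * / s = 1) by (field; lra).
  replace (exp (-1) / 2) with (s * (exp (-1) / (2 * s))) by (field; lra).
  split; nra.
Qed.

(** * Lieb's constant *)

Definition lieb_prefactor (d : nat) (alpha : R) : R :=
  / Rpower (2 * PI) alpha
  * (Gamma ((INR d - alpha) / 2) / Gamma (alpha / 2))
  * (INR d / alpha)
  * Rpower (omega_sphere d / INR d) (1 - alpha / INR d)
  * Rpower (1 - alpha / INR d) (1 - alpha / INR d).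

Lemma mul_lieb_prefactor_eq d alpha :
  0 < alpha < INR d -> Gamma (alpha / 2) <> 0 ->
  (1 - alpha / INR d) * lieb_prefactor d alpha
  = / Rpower (2 * PI) alpha
    * ((INR d - alpha) / 2 * Gamma ((INR d - alpha) / 2)
       * / (alpha / 2 * Gamma (alpha / 2)))
    * Rpower (omega_sphere d / INR d) (1 - alpha / INR d)
    * Rpower (1 - alpha / INR d) (1 - alpha / INR d).
Proof.
  intros Ha HG. unfold lieb_prefactor. field.
  generalize (Rpower_pos (2 * PI) alpha). intros. repeat split; try exact HG; lra.
Qed.

Lemma lieb_prefactor_bounds d : (0 < d)%nat ->
  exists c C, 0 < c /\ forall alpha, 0 < alpha < INR d ->
    c <= (1 - alpha / INR d) * lieb_prefactor d alpha <= C.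
Proof.
  intros Hd. assert (Hdd : 0 < INR d) by now apply lt_0_INR.
  set (K := INR d / 2).
  set (c0 := exp (-1) / 2).
  set (C0 := 2 * K * gamma_tail_const K + 1).
  set (W := Rabs (ln (omega_sphere d / INR d))).
  assert (Hc0 : 0 < c0) by (generalize (exp_pos (-1)); unfold c0; lra).
  assert (HC0 : 0 < C0).
  { generalize (exp_pos (K * ln (2 * K) - K)). unfold C0, gamma_tail_const, K. nra. }
  assert (H2pi : 1 <= 2 * PI) by (generalize PI_RGT_0 PI2_1; lra).
  assert (Hl1 : 0 < / Rpower (2 * PI) (INR d)) by apply Rinv_0_lt_compat, Rpower_pos.
  assert (Hl2 : 0 < c0 * / C0) by (apply Rmult_lt_0_compat, Rinv_0_lt_compat; lra).
  assert (Hl12 := Rmult_lt_0_compat _ _ Hl1 Hl2).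
  assert (Hl123 := Rmult_lt_0_compat _ _ Hl12 (exp_pos (- W))).
  exists (/ Rpower (2 * PI) (INR d) * (c0 * / C0) * exp (- W) * exp (-1)),
         (1 * (C0 * / c0) * exp W * 1).
  split; [exact (Rmult_lt_0_compat _ _ Hl123 (exp_pos (-1))) |].
  intros alpha Ha.
  assert (Hs : 0 < 1 - alpha / INR d <= 1).
  { assert (alpha / INR d < 1) by (apply Rlt_div_l; lra).
    assert (0 < alpha / INR d) by (apply Rdiv_lt_0_compat; lra).
    lra. }
  assert (Hg1 := Gamma_mul_bounds K ((INR d - alpha) / 2) ltac:(unfold K; lra)).
  assert (Hg2 := Gamma_mul_bounds K (alpha / 2) ltac:(unfold K; lra)).
  fold c0 C0 in Hg1, Hg2.
  rewrite mul_lieb_prefactor_eq by (exact Ha || (intros HG; rewrite HG in Hg2; lra)).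
  apply Rmult_le_compat_bounds; [lra | apply Rlt_le, exp_pos | | apply Rpower_self_bounds, Hs].
  apply Rmult_le_compat_bounds; [lra | apply Rlt_le, exp_pos | | apply Rpower_exponent_01_bounds; lra].
  apply Rmult_le_compat_bounds; [lra | lra | |].
  - rewrite <- Rinv_1. apply Rinv_bounds; [lra |].
    split; [apply Rpower_ge_1 | apply Rle_Rpower]; lra.
  - apply Rmult_le_compat_bounds; [lra | apply Rlt_le, Rinv_0_lt_compat; lra | exact Hg1 |].
    now apply Rinv_bounds.
Qed.

(* [x = 1/p] and [y = 1/q], so that [s = 1/p' + 1/q]; the factors [P] and [Q] below stand
   for [p'^(1/q)] and [q^(1/p')]. *)
Section ExponentFactor.

Variables x y : R.
Hypothesis Hy : 0 < y.
Hypothesis Hyx : y <= x.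
Hypothesis Hx : x < 1.

Local Notation s := (1 - x + y).

Lemma weighted_sum_le_min P Q :
  1 <= P -> 1 <= Q -> (1 - x) * P <= exp 1 * s -> y * Q <= exp 1 * s ->
  x * (1 - y) / s * (P + Q)
  <= (1 + exp 1) * Rmin (Q / ((1 - x) / x)) (P / (y / (1 - y))).
Proof.
  intros HP HQ HPs HQs.
  assert (He : 1 <= exp 1) by (generalize (exp_ineq1_le 1); lra).
  assert (Hs : 0 < s) by lra.
  apply Rmin_case.
  - replace (Q / ((1 - x) / x)) with (x * Q / (1 - x)) by (field; lra).
    apply (Rmult_le_reg_r (s * (1 - x))); [nra |].
    replace (x * (1 - y) / s * (P + Q) * (s * (1 - x)))
      with (x * (1 - y) * ((1 - x) * P) + x * Q * ((1 - y) * (1 - x))) by (field; lra).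
    replace ((1 + exp 1) * (x * Q / (1 - x)) * (s * (1 - x)))
      with (x * Q * (exp 1 * s) + x * Q * s) by (field; lra).
    assert (x * (1 - y) * ((1 - x) * P) <= x * Q * (exp 1 * s))
      by (apply Rmult_le_compat; nra).
    assert (x * Q * ((1 - y) * (1 - x)) <= x * Q * s)
      by (apply Rmult_le_compat_l; nra).
    lra.
  - replace (P / (y / (1 - y))) with ((1 - y) * P / y) by (field; lra).
    apply (Rmult_le_reg_r (s * y)); [nra |].
    replace (x * (1 - y) / s * (P + Q) * (s * y))
      with ((1 - y) * P * (x * y) + x * (1 - y) * (y * Q)) by (field; lra).
    replace ((1 + exp 1) * ((1 - y) * P / y) * (s * y))
      with ((1 - y) * P * s + (1 - y) * P * (exp 1 * s)) by (field; lra).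
    assert ((1 - y) * P * (x * y) <= (1 - y) * P * s)
      by (apply Rmult_le_compat_l; nra).
    assert (x * (1 - y) * (y * Q) <= (1 - y) * P * (exp 1 * s))
      by (apply Rmult_le_compat; nra).
    lra.
Qed.

Lemma min_le_weighted_sum P Q : 0 <= P -> 0 <= Q ->
  Rmin (Q / ((1 - x) / x)) (P / (y / (1 - y))) / 4 <= x * (1 - y) / s * (P + Q).
Proof.
  intros HP HQ.
  assert (Hs : 0 < s) by lra.
  destruct (Rle_dec y (1 - x)) as [Hsmall | Hlarge].
  - (* then [y <= 1/2] and [s <= 2 (1 - x)] *)
    apply Rle_trans with (Q / ((1 - x) / x) / 4);
      [apply Rmult_le_compat_r, Rmin_l; lra |].
    replace (Q / ((1 - x) / x) / 4) with (x * Q / (4 * (1 - x))) by (field; lra).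
    apply (Rmult_le_reg_r (4 * s * (1 - x))); [nra |].
    replace (x * Q / (4 * (1 - x)) * (4 * s * (1 - x))) with (x * Q * s) by (field; lra).
    replace (x * (1 - y) / s * (P + Q) * (4 * s * (1 - x)))
      with (4 * x * (1 - y) * (1 - x) * P + x * Q * (4 * (1 - y) * (1 - x))) by (field; lra).
    assert (x * Q * s <= x * Q * (4 * (1 - y) * (1 - x))) by (apply Rmult_le_compat_l; nra).
    assert (0 <= 4 * x * (1 - y) * (1 - x) * P) by (apply Rmult_le_pos; nra).
    lra.
  - (* then [x > 1/2] and [s < 2 y] *)
    apply Rle_trans with (P / (y / (1 - y)) / 4);
      [apply Rmult_le_compat_r, Rmin_r; lra |].
    replace (P / (y / (1 - y)) / 4) with ((1 - y) * P / (4 * y)) by (field; lra).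
    apply (Rmult_le_reg_r (4 * s * y)); [nra |].
    replace ((1 - y) * P / (4 * y) * (4 * s * y)) with ((1 - y) * P * s) by (field; lra).
    replace (x * (1 - y) / s * (P + Q) * (4 * s * y))
      with ((1 - y) * P * (4 * x * y) + 4 * x * (1 - y) * y * Q) by (field; lra).
    assert ((1 - y) * P * s <= (1 - y) * P * (4 * x * y)) by (apply Rmult_le_compat_l; nra).
    assert (0 <= 4 * x * (1 - y) * y * Q) by (apply Rmult_le_pos; nra).
    lra.
Qed.

Lemma exponent_factor_bounds :
  let P := Rpower (/ (1 - x)) y in
  let Q := Rpower (/ y) (1 - x) in
  x * (1 - y) / s * (P + Q)
  <= x * (1 - y) / s * (Rpower (/ (1 - x)) s + Rpower (/ y) s)
  <= exp 1 * (x * (1 - y) / s * (P + Q)).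
Proof.
  intros P Q.
  rewrite (Rpower_plus (1 - x) y (/ (1 - x))), (Rpower_plus (1 - x) y (/ y)).
  fold P Q.
  assert (HP : 1 <= P) by (apply Rpower_inv_ge_1; lra).
  assert (HQ : 1 <= Q) by (apply Rpower_inv_ge_1; lra).
  assert (H1 := Rpower_inv_self_bounds (1 - x) ltac:(lra)).
  assert (H2 := Rpower_inv_self_bounds y ltac:(lra)).
  assert (Hw : 0 <= x * (1 - y) / s) by (apply Rle_mult_inv_pos; nra).
  split.
  - apply Rmult_le_compat_l; nra.
  - rewrite (Rmult_comm (exp 1)), Rmult_assoc. apply Rmult_le_compat_l; nra.
Qed.

Lemma exponent_factor_comparable :
  let S := Rmin (Rpower (/ y) (1 - x) / ((1 - x) / x)) (Rpower (/ (1 - x)) y / (y / (1 - y))) in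
  S / 4 <= x * (1 - y) / s * (Rpower (/ (1 - x)) s + Rpower (/ y) s)
  <= exp 1 * (1 + exp 1) * S.
Proof.
  intros S.
  assert (HP : 1 <= Rpower (/ (1 - x)) y) by (apply Rpower_inv_ge_1; lra).
  assert (HQ : 1 <= Rpower (/ y) (1 - x)) by (apply Rpower_inv_ge_1; lra).
  assert (HPs : (1 - x) * Rpower (/ (1 - x)) y <= exp 1 * s).
  { eapply Rle_trans; [apply mul_Rpower_inv_le; lra |].
    apply Rmult_le_compat_l; [apply Rlt_le, exp_pos | apply Rmax_lub; lra]. }
  assert (HQs : y * Rpower (/ y) (1 - x) <= exp 1 * s).
  { eapply Rle_trans; [apply mul_Rpower_inv_le; lra |].
    apply Rmult_le_compat_l; [apply Rlt_le, exp_pos | apply Rmax_lub; lra]. }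
  assert (Hlo := min_le_weighted_sum _ _ (Rle_trans _ _ _ Rle_0_1 HP) (Rle_trans _ _ _ Rle_0_1 HQ)).
  assert (Hhi := weighted_sum_le_min _ _ HP HQ HPs HQs).
  assert (HG := exponent_factor_bounds). cbv zeta in HG.
  assert (He := exp_pos 1).
  fold S in Hlo, Hhi. split; [lra |].
  rewrite Rmult_assoc. eapply Rle_trans; [apply HG |].
  apply Rmult_le_compat_l; lra.
Qed.

End ExponentFactor.

Definition lieb_exponent_factor (p q : R) : R :=
  / (p * conj_exp q) / (/ conj_exp p + / q)
  * (Rpower (conj_exp p) (/ conj_exp p + / q) + Rpower q (/ conj_exp p + / q)).

Lemma E_H_tilde_factor alpha p q d :
  / conj_exp p + / q = 1 - alpha / INR d -> 1 - alpha / INR d <> 0 ->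
  E_H_tilde alpha p q d
  = (1 - alpha / INR d) * lieb_prefactor d alpha * lieb_exponent_factor p q.
Proof.
  intros Hs Hs0.
  change (E_H_tilde alpha p q d) with (lieb_prefactor d alpha * / (p * conj_exp q)
    * (Rpower (conj_exp p) (/ conj_exp p + / q) + Rpower q (/ conj_exp p + / q))).
  unfold lieb_exponent_factor. rewrite Hs. revert Hs0.
  generalize (1 - alpha / INR d) (lieb_prefactor d alpha) (/ (p * conj_exp q)).
  intros. field. exact Hs0.
Qed.

Lemma S_pq_pos p q : 1 < p -> 1 < q -> 0 < S_pq p q.
Proof.
  intros Hp Hq. unfold S_pq, conj_exp.
  replace (q / (q - 1) - 1) with (/ (q - 1)) by (field; lra).
  apply Rmin_glb_lt; apply Rdiv_lt_0_compat;
    try apply Rpower_pos; try apply Rinv_0_lt_compat; lra.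
Qed.

Lemma lieb_exponent_factor_comparable p q : 1 < p <= q ->
  S_pq p q / 4 <= lieb_exponent_factor p q <= exp 1 * (1 + exp 1) * S_pq p q.
Proof.
  intros Hpq.
  assert (Hx : / p < 1) by (rewrite <- Rinv_1; apply Rinv_lt_contravar; lra).
  assert (Hy : 0 < / q) by (apply Rinv_0_lt_compat; lra).
  assert (Hyx : / q <= / p) by (apply Rinv_le_contravar; lra).
  assert (H := exponent_factor_comparable (/ p) (/ q) Hy Hyx Hx). cbv zeta in H.
  replace (S_pq p q)
    with (Rmin (Rpower (/ / q) (1 - / p) / ((1 - / p) / / p))
               (Rpower (/ (1 - / p)) (/ q) / (/ q / (1 - / q)))).
  2: { unfold S_pq, conj_exp. rewrite Rinv_inv.
       replace (/ (p / (p - 1))) with (1 - / p) by (field; lra).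
       replace (p / (p - 1)) with (/ (1 - / p)) by (field; lra).
       f_equal; f_equal; field; repeat split; lra. }
  replace (lieb_exponent_factor p q)
    with (/ p * (1 - / q) / (1 - / p + / q)
          * (Rpower (/ (1 - / p)) (1 - / p + / q) + Rpower (/ / q) (1 - / p + / q))).
  2: { unfold lieb_exponent_factor, conj_exp. rewrite Rinv_inv.
       replace (/ (p / (p - 1))) with (1 - / p) by (field; lra).
       replace (p / (p - 1)) with (/ (1 - / p)) by (field; lra).
       f_equal. field. repeat split; nra. }
  exact H.
Qed.

Lemma Rmult_two_sided_bounds c C k T F S :
  0 < c -> 0 < k -> 0 <= S -> c <= T <= C -> S / 4 <= F <= k * S ->
  / Rmax (4 / c) (C * k) * S <= T * F <= Rmax (4 / c) (C * k) * S.
Proof.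
  intros Hc Hk HS HT HF.
  assert (HB1 : 4 / c <= Rmax (4 / c) (C * k)) by apply Rmax_l.
  assert (HB2 : C * k <= Rmax (4 / c) (C * k)) by apply Rmax_r.
  assert (Hc4 : 0 < 4 / c) by (apply Rdiv_lt_0_compat; lra).
  split.
  - assert (/ Rmax (4 / c) (C * k) <= c / 4).
    { replace (c / 4) with (/ (4 / c)) by (field; lra). apply Rinv_le_contravar; lra. }
    apply Rle_trans with (c * (S / 4)); [nra |].
    apply Rmult_le_compat; lra.
  - apply Rle_trans with (T * (k * S)); [apply Rmult_le_compat_l; lra |].
    nra.
Qed.

Theorem theorem4p2 (d : nat) (hd : (1 <= d)%nat) :
  exists B3 : R, 0 < B3 /\
    forall p alpha q : R,
      1 < p -> 0 < alpha -> alpha < INR d / p ->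
      p <= q -> / q = / p - alpha / INR d ->
      / B3 * S_pq p q <= E_H_tilde alpha p q d /\
      E_H_tilde alpha p q d <= B3 * S_pq p q.
Proof.
  destruct (lieb_prefactor_bounds d hd) as (c & C & Hc & Hpre).
  assert (Hk : 0 < exp 1 * (1 + exp 1)) by (generalize (exp_pos 1); nra).
  exists (Rmax (4 / c) (C * (exp 1 * (1 + exp 1)))).
  split; [apply Rlt_le_trans with (4 / c); [apply Rdiv_lt_0_compat; lra | apply Rmax_l] |].
  intros p alpha q Hp Ha Had Hpq Hq.
  assert (Hdd : 0 < INR d) by now apply lt_0_INR.
  assert (Had' : alpha < INR d)
    by (apply Rlt_le_trans with (1 := Had), Rle_div_l; nra).
  assert (Hs : / conj_exp p + / q = 1 - alpha / INR d)
    by (rewrite Hq; unfold conj_exp; field; lra).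
  assert (Hratio : alpha / INR d < 1) by (apply Rlt_div_l; lra).
  rewrite E_H_tilde_factor by (exact Hs || lra).
  apply Rmult_two_sided_bounds; [lra | lra | | | ].
  - apply Rlt_le, S_pq_pos; lra.
  - now apply Hpre.
  - apply lieb_exponent_factor_comparable. lra.
Qed.
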